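(* Let $X$ be a finite metric space whose similarity matrix $Z_X$ is invertible. Then the space of lines to $X$, $\mathcal{L}(X)$, contains a dense open subset each of whose elements $(Y_{f,t})_{0<t\le1}$ satisfies $\lim_{t\to0}|Y_{f,t}|=|X|$.
   Context: For a finite metric space $(X,d)$, the similarity matrix $Z_X$ has entries $Z_X(x,y)=e^{-d(x,y)}$. A weighting is $\mathbf{w}\in\mathbb{R}^X$ with $Z_X\mathbf{w}=(1,\dots,1)^\top$; if one exists, the magnitude $|X|$ is the sum of its entries (independent of choice). For finite metric spaces $(X,d_X)$, $(Y,d_Y)$ and a surjection $f\colon Y\to X$, the line from $Y$ to $X$ along $f$ is the family $(Y_{f,t})_{0<t\le1}$, $Y_{f,t}=(Y,d_{f,t})$ with $d_{f,t}(y,y')=t\,d_Y(y,y')+(1-t)\,d_X(f(y),f(y'))$. The set $\mathcal{L}(X)$ of lines to $X$ consists of all such lines modulo: $(Y_{f,t})\sim(Y_{g,t})$ if there are isometries $h\colon Y\to Y$, $k\colon X\to X$ with $k\circ f=g\circ h$. Topology: label $X=\{x_1,\dots,x_m\}$. Let $\mathrm{Met}_n\subset\mathbb{R}^{n\times n}$ be the set of distance matrices of ordered $n$-point metric spaces, with the Euclidean topology. A line along $f\colon Y\to X$, $\#Y=n$, with $r_i=\#f^{-1}(x_i)$ and $f^{-1}(x_i)=\{y_i^1,\dots,y_i^{r_i}\}$, is represented by the distance matrix of $Y$ in the ordering $(y_1^1,\dots,y_1^{r_1},\dots,y_m^1,\dots,y_m^{r_m})$, in the component indexed by $(r_1,\dots,r_m)$.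 This induces a bijection of $\mathcal{L}(X)$ with $\big(\bigsqcup_{(r_1,\dots,r_m),\,r_i\ge1,\,n=\sum r_i}\mathrm{Met}_n/(\mathfrak{S}_{r_1}\times\cdots\times\mathfrak{S}_{r_m})\big)/\mathrm{Iso}(X)$, where $\mathfrak{S}_{r_i}$ permutes rows and columns simultaneously within the $i$-th block and $\mathrm{Iso}(X)\subseteq\mathfrak{S}_m$ permutes the blocks. $\mathcal{L}(X)$ is given the topology transported via this bijection from the quotient topology (Euclidean topology on each $\mathrm{Met}_n$, then quotient by the finite groups, then quotient by $\mathrm{Iso}(X)$). *)

From HB Require Import structures.
From mathcomp Require Import all_boot all_order all_algebra.
From mathcomp Require Import all_classical all_reals all_analysis.
Set Implicit Arguments. Unset Strict Implicit. Unset Printing Implicit Defensive.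
Import Order.TTheory GRing.Theory Num.Theory.
Local Open Scope ring_scope.
Local Open Scope classical_set_scope.

Section Magnitude.
Variable R : realType.

Definition is_metric (n : nat) (d : 'I_n -> 'I_n -> R) : Prop :=
  [/\ (forall x y, 0 <= d x y),
      (forall x y, d x y = 0 <-> x = y),
      (forall x y, d x y = d y x) &
      (forall x y z, d x z <= d x y + d y z)].

Definition simZ (n : nat) (d : 'I_n -> 'I_n -> R) : 'M[R]_n :=
  \matrix_(i, j) expR (- d i j).

Definition is_weighting (n : nat) (Z : 'M[R]_n) (w : 'cV[R]_n) : Prop :=
  Z *m w = const_mx 1.

Definition has_weighting (n : nat) (Z : 'M[R]_n) : Prop :=
  exists w, is_weighting Z w.

(* magnitude: sum of the entries of a (chosen) weighting, if one exists;
   (junk value 0 otherwise -- only used where a weighting exists) *)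
Definition magnitude (n : nat) (Z : 'M[R]_n) : R :=
  match pselect (has_weighting Z) with
  | left h => \sum_i (projT1 (cid h)) i ord0
  | right _ => 0
  end.

End Magnitude.

Section Lines.
Variables (R : realType) (m : nat) (dX : 'I_m -> 'I_m -> R).

(* A representative of a point of L(X): n = #Y, the block map f : Y -> X
   (Y = 'I_n in the ordering (y_1^1,...,y_1^{r_1},...,y_m^1,...,y_m^{r_m}),
   so f is nondecreasing and surjective, and r_i = #f^{-1}(x_i) >= 1),
   and the distance matrix D of Y in that ordering. *)
Record line_rep := LineRep {
  lr_n : nat;
  lr_f : 'I_lr_n -> 'I_m;
  lr_D : 'I_lr_n -> 'I_lr_n -> R }.
Arguments lr_f : clear implicits.
Arguments lr_D : clear implicits.

Definition block_map (n : nat) (f : 'I_n -> 'I_m) : Prop :=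
  (forall y y' : 'I_n, (y <= y')%N -> (f y <= f y')%N) /\
  (forall x : 'I_m, exists y, f y = x).

(* the points of the disjoint union of the Met_n over all components *)
Definition valid_rep (p : line_rep) : Prop :=
  block_map (lr_f p) /\ is_metric (lr_D p).

Definition line_dist (p : line_rep) (t : R) : 'I_(lr_n p) -> 'I_(lr_n p) -> R :=
  fun y y' => t * lr_D p y y' + (1 - t) * dX (lr_f p y) (lr_f p y').

Arguments line_dist : clear implicits.

Definition isometry_X (k : 'I_m -> 'I_m) : Prop :=
  bijective k /\ (forall x x', dX (k x) (k x') = dX x x').

(* On the
   ordered representatives this is exactly the quotient by the block
   permutations S_{r_1} x ... x S_{r_m} followed by the quotient by Iso(X). *)
Definition line_equiv (p q : line_rep) : Prop :=
  exists (h : 'I_(lr_n p) -> 'I_(lr_n q)) (k : 'I_m -> 'I_m),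
    [/\ bijective h, isometry_X k,
        (forall y, lr_f q (h y) = k (lr_f p y)) &
        (forall y y', lr_D q (h y) (h y') = lr_D p y y')].

(* subsets of L(X) correspond to saturated subsets of the disjoint union *)
Definition saturated (S : line_rep -> Prop) : Prop :=
  forall p q, valid_rep p -> valid_rep q -> line_equiv p q -> S p -> S q.

(* openness in the disjoint union of the Met_n (Euclidean topology on each
   Met_n, i.e. subspace topology from R^{n x n}); the quotient topology on
   L(X) declares a subset open iff its (saturated) preimage is open. *)
Definition open_rep (S : line_rep -> Prop) : Prop :=
  forall n (f : 'I_n -> 'I_m) (D : 'I_n -> 'I_n -> R),
    block_map f -> is_metric D -> S (LineRep f D) ->
    exists2 e : R, 0 < e &
      forall D' : 'I_n -> 'I_n -> R, is_metric D' ->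
        (forall i j, `|D' i j - D i j| < e) -> S (LineRep f D').

(* density in the quotient topology: every nonempty open subset of L(X)
   (= nonempty open saturated subset of the disjoint union) meets S *)
Definition dense_rep (S : line_rep -> Prop) : Prop :=
  forall W : line_rep -> Prop, saturated W -> open_rep W ->
    (exists p, valid_rep p /\ W p) ->
    exists p, [/\ valid_rep p, W p & S p].

Definition line_mag_limit (p : line_rep) : Prop :=
  (\forall t \near at_right (0:R), has_weighting (simZ (line_dist p t))) /\
  (magnitude (simZ (line_dist p t)) @[t --> at_right (0:R)] --> (magnitude (simZ dX) : R^o)).

End Lines.

From HB Require Import structures.
From mathcomp Require Import all_boot all_order all_algebra.
From mathcomp Require Import all_classical all_reals all_analysis.
From mathcomp Require Import ring lra.
Import Order.TTheory GRing.Theory Num.Theory.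
Local Open Scope ring_scope.
Local Open Scope classical_set_scope.
Set Implicit Arguments. Unset Strict Implicit. Unset Printing Implicit Defensive.

(* Fix a section g of f : Y -> X, i.e. a representative of each fibre.  Replacing
   every non-representative column y of Z_{Y_t} by (col y - col (g (f y))) / t gives
   a matrix M_t = Z_{Y_t} T_t with a limit M_0 as t -> 0, whose representative
   columns are those of Z_X pulled back along f.  The weighting of Y_t is T_t M_t^-1 1,
   and the column sums of T_t vanish off the representatives, so |Y_t| is the sum of
   M_t^-1 1 over the representatives.  If M_0 is invertible this tends to the same sum
   for M_0^-1 1, which is the weighting of X placed on the representatives: |Y_t| -> |X|.
   Invertibility of M_0 is an open condition on d_Y, and it holds for d_Y + s (1 - delta)
   for all but finitely many s, since after rescaling it becomes, as s -> oo, the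
   invertibility of Z_X.  The required set is the interior of the set of lines along
   which |Y_t| -> |X|; it is saturated because magnitude is invariant under isometries. *)

Section Limits.
Variable R : realType.

Lemma cvg_det {T : Type} {F : set_system T} {FF : Filter F} k (M : T -> 'M[R]_k) (L : 'M[R]_k) :
  (forall i j, (fun x => M x i j) @ F --> (L i j : R^o)) ->
  (fun x => \det (M x)) @ F --> (\det L : R^o).
Proof.
move=> ML; apply: (@cvg_big R^o _ +%R 0 xpredT add_continuous) => s _.
apply: cvgMl_tmp; apply: (@cvg_big R^o _ *%R 1 xpredT mul_continuous) => i _.
exact: ML.
Qed.

Lemma cvg_invmx {T : Type} {F : set_system T} {FF : Filter F} k (M : T -> 'M[R]_k) (L : 'M[R]_k) :
  (forall i j, (fun x => M x i j) @ F --> (L i j : R^o)) -> \det L != 0 ->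
  forall i j, (fun x => invmx (M x) i j) @ F --> (invmx L i j : R^o).
Proof.
move=> ML detL i j.
have detM : (fun x => \det (M x)) @ F --> (\det L : R^o) by exact: cvg_det.
have cofactorM : (fun x => cofactor (M x) j i) @ F --> (cofactor L j i : R^o).
  apply: cvgMl_tmp; apply: cvg_det => a b; rewrite !mxE.
  by under eq_cvg do rewrite !mxE; exact: ML.
rewrite /invmx unitmxE unitfE detL !mxE.
apply: cvg_trans (near_eq_cvg (f := fun x => (\det (M x))^-1 * cofactor (M x) j i) _) _.
  near=> x; have detMx : \det (M x) != 0 by near: x; exact: cvgr_neq0 detM detL.
  by rewrite /invmx unitmxE unitfE detMx !mxE.
exact: cvgM (cvgV detL detM) cofactorM.
Unshelve. all: by end_near.
Qed.

Lemma cvg_expR_affine (a b : R) : (fun t => expR (a + t * b)) @ 0^'+ --> (expR a : R^o).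
Proof.
have affine : (fun t : R => a + t * b) @ 0^'+ --> (a : R^o).
  apply: cvg_at_right_filter; rewrite -[X in _ --> X]addr0 -[X in _ --> a + X](mul0r b).
  by apply: cvgD; [exact: cvg_cst | apply: cvgMr_tmp; exact: cvg_id].
exact: (cvg_comp _ _ affine (@continuous_expR R a)).
Qed.

Lemma cvg_expR_diff_quotient (a b : R) :
  (fun t => (expR (a + t * b) - expR a) / t) @ 0^'+ --> (b * expR a : R^o).
Proof.
apply: (@cvg_dnbhs_at_right R R^o).
have derivable_expR_at : derivable (@expR R) (a : R^o) b.
  by apply: diff_derivable; apply/derivable1_diffP/derivable_expR.
have -> : b * expR a = 'D_b (@expR R) a.
  rewrite deriveE; last by apply/derivable1_diffP/derivable_expR.
  by rewrite deriv1E ?derive1E ?derive_val //; exact: derivable_expR.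
apply: cvg_trans _ derivable_expR_at; apply: near_eq_cvg; near=> t.
by rewrite /= -![_ *: _]/(_ * _) mulrC (addrC a).
Unshelve. all: by end_near.
Qed.

End Limits.

Section Deltas.
Variables (R : pzSemiRingType) (n : nat).

Lemma sum_cond_mul_delta (P : pred 'I_n) (a : 'I_n -> R) y :
  \sum_(x | P x) a x * (x == y)%:R = (P y)%:R * a y.
Proof.
have [Py|nPy] := boolP (P y).
  rewrite (bigD1 y) //= eqxx mulr1 mul1r big1 ?addr0 // => x /andP[_ /negbTE ->].
  by rewrite mulr0.
rewrite mul0r big1 // => x Px; rewrite (_ : x == y = false) ?mulr0 //.
by apply: contraNF nPy => /eqP <-.
Qed.

Lemma sum_mul_delta (a : 'I_n -> R) y : \sum_x a x * (x == y)%:R = a y.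
Proof. by rewrite sum_cond_mul_delta mul1r. Qed.

End Deltas.

Lemma exists_nonroot_gt (R : numDomainType) (p : {poly R}) (a : R) :
  p != 0 -> exists2 u, a < u & ~~ root p u.
Proof.
move=> p0; pose us := [seq a + k.+1%:R | k <- iota 0 (size p)].
have /allPn [_ /mapP [k _ ->] nroot] : ~~ all (root p) us.
  apply/negP => roots; suff : uniq us.
    by move/(max_poly_roots p0 roots); rewrite size_map size_iota ltnn.
  by rewrite map_inj_uniq ?iota_uniq // => i j /addrI /eqP; rewrite eqr_nat => /eqP [].
by exists (a + k.+1%:R); rewrite ?ltrDl ?ltr0n.
Qed.

Section Magnitude.
Variable R : realType.

Definition weighting_of n (Z : 'M[R]_n) : 'cV[R]_n := invmx Z *m const_mx 1.

Lemma weighting_ofP n (Z : 'M[R]_n) : Z \in unitmx -> is_weighting Z (weighting_of Z).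
Proof. by move=> Zunit; rewrite /is_weighting mulmxA mulmxV // mul1mx. Qed.

Lemma unitmx_weightingE n (Z : 'M[R]_n) w : Z \in unitmx -> is_weighting Z w ->
  w = weighting_of Z.
Proof. by move=> Zunit Zw; rewrite /weighting_of -Zw mulKmx. Qed.

Lemma magnitude_unitmx n (Z : 'M[R]_n) : Z \in unitmx ->
  has_weighting Z /\ magnitude Z = \sum_i weighting_of Z i 0.
Proof.
move=> Zunit; have Zw := weighting_ofP Zunit.
split; first by exists (weighting_of Z).
rewrite /magnitude; case: pselect => [w|[]]; last by exists (weighting_of Z).
by rewrite -(unitmx_weightingE Zunit (projT2 (cid w))).
Qed.

(* Both sums equal w'^T Z w. *)
Lemma weighting_sum_sym n (Z : 'M[R]_n) w w' : (forall i j, Z i j = Z j i) ->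
  is_weighting Z w -> is_weighting Z w' -> \sum_i w i 0 = \sum_i w' i 0.
Proof.
move=> Zsym Zw Zw'.
have row_eq (v : 'cV[R]_n) i : Z *m v = const_mx 1 -> \sum_j Z i j * v j 0 = 1.
  by move/(congr1 (fun M : 'cV[R]_n => M i 0)); rewrite !mxE.
transitivity (\sum_i \sum_j w' j 0 * Z j i * w i 0).
  apply: eq_bigr => i _; rewrite -mulr_suml -[LHS]mul1r -(row_eq _ i Zw').
  by congr (_ * _); apply: eq_bigr => j _; rewrite Zsym mulrC.
rewrite exchange_big /=; apply: eq_bigr => j _.
by under eq_bigr do rewrite -mulrA; rewrite -mulr_sumr row_eq // mulr1.
Qed.

Lemma weighting_reindex n1 n2 (Z1 : 'M[R]_n1) (Z2 : 'M[R]_n2) (k : 'I_n1 -> 'I_n2) w2 :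
  bijective k -> (forall y y', Z1 y y' = Z2 (k y) (k y')) -> is_weighting Z2 w2 ->
  is_weighting Z1 (\col_y w2 (k y) 0) /\ \sum_y (\col_y w2 (k y) 0) y 0 = \sum_z w2 z 0.
Proof.
move=> /onW_bij kbij Zk Zw2.
split; last by rewrite (reindex k (kbij _)); apply: eq_bigr => y _; rewrite mxE.
apply/matrixP => y j; rewrite !mxE (ord1 j).
move/(congr1 (fun M : 'cV[R]_n2 => M (k y) 0)): Zw2; rewrite !mxE => <-.
by rewrite (reindex k (kbij _)); apply: eq_bigr => y' _; rewrite Zk mxE.
Qed.

Lemma magnitude_reindex n1 n2 (Z1 : 'M[R]_n1) (Z2 : 'M[R]_n2) (k : 'I_n1 -> 'I_n2) :
  bijective k -> (forall y y', Z1 y y' = Z2 (k y) (k y')) -> (forall i j, Z2 i j = Z2 j i) ->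
  (has_weighting Z1 <-> has_weighting Z2) /\ magnitude Z1 = magnitude Z2.
Proof.
move=> kbij Zk Z2sym; have [k' kK k'K] := kbij.
have k'bij : bijective k' by exists k.
have Zk' z z' : Z2 z z' = Z1 (k' z) (k' z') by rewrite Zk !k'K.
have Z1sym i j : Z1 i j = Z1 j i by rewrite !Zk Z2sym.
have w21 : has_weighting Z2 -> has_weighting Z1.
  by case=> w2 /(weighting_reindex kbij Zk) [Zw1 _]; eexists; exact: Zw1.
have w12 : has_weighting Z1 -> has_weighting Z2.
  by case=> w1 /(weighting_reindex k'bij Zk') [Zw2 _]; eexists; exact: Zw2.
split; first by split.
rewrite /magnitude; case: pselect => [h1|nh1]; case: pselect => [h2|nh2].
- have [Zw1 <-] := weighting_reindex kbij Zk (projT2 (cid h2)).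
  exact: weighting_sum_sym Z1sym (projT2 (cid h1)) Zw1.
- by case: nh2; exact: w12.
- by case: nh1; exact: w21.
- by [].
Qed.

End Magnitude.

Section LineLimit.
Variables (R : realType) (m : nat) (dX : 'I_m -> 'I_m -> R).
Variables (n : nat) (f : 'I_n -> 'I_m) (g : 'I_m -> 'I_n).
Hypothesis fK : cancel g f.
Implicit Types (D : 'I_n -> 'I_n -> R) (t : R).

Definition fibre_rep (y : 'I_n) : bool := g (f y) == y.

Lemma big_fibre_rep (h : 'I_n -> R) : \sum_(y | fibre_rep y) h y = \sum_b h (g b).
Proof.
rewrite (reindex_onto g f (P := fibre_rep)) /=; last by move=> y /eqP.
by apply: eq_bigl => b; rewrite /fibre_rep !fK !eqxx.
Qed.

Definition Zpull (x y : 'I_n) : R := simZ dX (f x) (f y).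

Definition Zline D t : 'M[R]_n := simZ (line_dist dX (p := LineRep f D) t).

Lemma ZlineE D t x y :
  Zline D t x y = expR (- dX (f x) (f y) + t * (dX (f x) (f y) - D x y)).
Proof. by rewrite mxE; congr expR; rewrite /line_dist /=; ring. Qed.

Definition fibre_colop t : 'M[R]_n := \matrix_(z, y)
  if fibre_rep y then (z == y)%:R else ((z == y)%:R - (z == g (f y))%:R) / t.

Definition Mline D t : 'M[R]_n := \matrix_(x, y)
  if fibre_rep y then Zline D t x y else (Zline D t x y - Zline D t x (g (f y))) / t.

Definition Mlim D : 'M[R]_n := \matrix_(x, y)
  if fibre_rep y then Zpull x y else Zpull x y * (D x (g (f y)) - D x y).

Lemma Zline_fibre_colop D t : Zline D t *m fibre_colop t = Mline D t.
Proof.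
apply/matrixP => x y; rewrite [LHS]mxE [RHS]mxE.
under eq_bigr do rewrite [fibre_colop _ _ _]mxE.
case: ifP => _; first exact: (sum_mul_delta (Zline D t x)).
under eq_bigr do rewrite mulrA mulrBr.
by rewrite -mulr_suml sumrB !(sum_mul_delta (Zline D t x)).
Qed.

Lemma colsum_fibre_colop t y : \sum_z fibre_colop t z y = (fibre_rep y)%:R.
Proof.
have sum_delta (y' : 'I_n) : \sum_z (z == y')%:R = 1 :> R.
  by rewrite -[RHS](sum_mul_delta (fun _ => 1) y'); apply: eq_bigr => z _; rewrite mul1r.
under eq_bigr do rewrite mxE.
case: (fibre_rep y); first exact: sum_delta.
by rewrite -mulr_suml sumrB !sum_delta subrr mul0r.
Qed.

Lemma cvg_Mline D x y : (fun t => Mline D t x y) @ 0^'+ --> (Mlim D x y : R^o).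
Proof.
set a := - dX (f x) (f y); set c := dX (f x) (f y).
have [rep|nrep] := boolP (fibre_rep y).
  have -> : (fun t => Mline D t x y) = (fun t => expR (a + t * (c - D x y))).
    by apply/funext => t; rewrite mxE rep ZlineE.
  by rewrite mxE rep /Zpull mxE; exact: cvg_expR_affine.
have -> : (fun t => Mline D t x y) = (fun t => (expR (a + t * (c - D x y)) - expR a) / t
    - (expR (a + t * (c - D x (g (f y)))) - expR a) / t).
  by apply/funext => t; rewrite mxE (negbTE nrep) !ZlineE fK -mulrBl; congr (_ * _); ring.
rewrite mxE (negbTE nrep) /Zpull mxE -/a.
rewrite (_ : _ * _ = (c - D x y) * expR a - (c - D x (g (f y))) * expR a); last by ring.
by apply: cvgB; exact: cvg_expR_diff_quotient.
Qed.

Lemma magnitude_line D t : t != 0 -> \det (Mline D t) != 0 ->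
  has_weighting (Zline D t) /\
  magnitude (Zline D t) = \sum_(y | fibre_rep y) weighting_of (Mline D t) y 0.
Proof.
move=> t0 detM.
have Munit : Mline D t \in unitmx by rewrite unitmxE unitfE.
have Zunit : Zline D t \in unitmx.
  rewrite unitmxE unitfE; apply: contraNneq detM => detZ.
  by rewrite -Zline_fibre_colop det_mulmx detZ mul0r.
have [Zw ->] := magnitude_unitmx Zunit; split => //.
have -> : weighting_of (Zline D t) = fibre_colop t *m weighting_of (Mline D t).
  apply/esym/unitmx_weightingE => //.
  by rewrite /is_weighting mulmxA Zline_fibre_colop; exact: weighting_ofP.
under eq_bigr do rewrite mxE.
rewrite exchange_big [RHS]big_mkcond /=; apply: eq_bigr => y _.
by rewrite -mulr_suml colsum_fibre_colop; case: (fibre_rep y); rewrite ?mul1r ?mul0r.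
Qed.

Lemma magnitude_Mlim D : simZ dX \in unitmx -> \det (Mlim D) != 0 ->
  \sum_(y | fibre_rep y) weighting_of (Mlim D) y 0 = magnitude (simZ dX).
Proof.
move=> Xunit detM.
have Munit : Mlim D \in unitmx by rewrite unitmxE unitfE.
have [_ ->] := magnitude_unitmx Xunit.
set wX := weighting_of (simZ dX).
pose u : 'cV[R]_n := \col_y (if fibre_rep y then wX (f y) 0 else 0).
have <- : u = weighting_of (Mlim D).
  apply: unitmx_weightingE => //; apply/matrixP => x j; rewrite (ord1 j) !mxE.
  move/(congr1 (fun M : 'cV[R]_m => M (f x) 0)): (weighting_ofP Xunit); rewrite !mxE => <-.
  rewrite (bigID fibre_rep) /= [X in _ + X]big1 ?addr0 => [|y /negbTE yrep]; last first.
    by rewrite !mxE yrep mulr0.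
  rewrite big_fibre_rep; apply: eq_bigr => b _.
  by rewrite !mxE /fibre_rep /Zpull !fK eqxx mxE.
rewrite (big_fibre_rep (fun y => u y 0)); apply: eq_bigr => b _.
by rewrite mxE /fibre_rep fK eqxx.
Qed.

Lemma line_mag_limit_Mlim D : simZ dX \in unitmx -> \det (Mlim D) != 0 ->
  line_mag_limit dX (LineRep f D).
Proof.
move=> Xunit detM.
have Mline_det : (fun t => \det (Mline D t)) @ 0^'+ --> (\det (Mlim D) : R^o).
  by apply: cvg_det => x y; exact: cvg_Mline.
have near_mag : \forall t \near 0^'+, has_weighting (Zline D t) /\
    magnitude (Zline D t) = \sum_(y | fibre_rep y) weighting_of (Mline D t) y 0.
  near=> t; apply: magnitude_line.
    by rewrite gt_eqF //; near: t; exact: nbhs_right_gt.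
  by near: t; exact: cvgr_neq0 Mline_det detM.
split; first by apply: filterS near_mag => t [].
apply: cvg_trans (near_eq_cvg (f := fun t =>
    \sum_(y | fibre_rep y) weighting_of (Mline D t) y 0) _) _.
  by apply: filterS near_mag => t [_ ->].
rewrite -(magnitude_Mlim Xunit detM).
apply: (@cvg_big R^o _ +%R 0 fibre_rep add_continuous) => y _.
rewrite mxE; under eq_cvg do rewrite mxE.
apply: (@cvg_big R^o _ +%R 0 xpredT add_continuous) => z _.
rewrite !mxE; apply: cvgMr_tmp.
by apply: cvg_invmx => // i j; exact: cvg_Mline.
Unshelve. all: by end_near.
Qed.

End LineLimit.

Section Box.
Variables (R : realFieldType) (n : nat).

Definition box (D : 'I_n -> 'I_n -> R) : set_system ('I_n -> 'I_n -> R) :=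
  filter_from [set e : R | 0 < e] (fun e => [set D' | forall i j, `|D' i j - D i j| < e]).

Lemma box_filter D : Filter (box D).
Proof.
apply: filter_from_filter; first by exists 1; rewrite /= ltr01.
move=> a b a0 b0; exists (Num.min a b); first by rewrite /= lt_min a0 b0.
by move=> D' D'D; split=> i j; have := D'D i j; rewrite lt_min => /andP[].
Qed.

Lemma cvg_box_entry D i j : (fun D' => D' i j) @ box D --> (D i j : R^o).
Proof.
move=> U /nbhs_ballP [e e0 ballU]; exists e => // D' D'D; apply: ballU.
by rewrite /ball /= distrC; exact: D'D.
Qed.

Lemma box_nearP (P : ('I_n -> 'I_n -> R) -> Prop) D : (\forall D' \near box D, P D') ->
  exists2 e : R, 0 < e & forall D', (forall i j, `|D' i j - D i j| < e) -> P D'.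
Proof. by case=> e e0 eP; exists e => // D' /eP. Qed.

End Box.

#[local] Existing Instance box_filter.

Lemma near_det_Mlim (R : realType) m (dX : 'I_m -> 'I_m -> R) n (f : 'I_n -> 'I_m) g D :
  \det (Mlim dX f g D) != 0 -> \forall D' \near box D, \det (Mlim dX f g D') != 0.
Proof.
move=> detM; apply: (cvgr_neq0 (\det (Mlim dX f g D) : R^o) _ detM).
apply: cvg_det => x y; rewrite mxE; under eq_cvg do rewrite mxE.
case: (fibre_rep f g y); first exact: (@cvg_cst R^o _ _ _ (box_filter D)).
by apply: cvgMl_tmp; apply: cvgB; exact: cvg_box_entry.
Qed.

Section Metrics.
Variables (R : realType) (n : nat).

Definition shift_dist (D : 'I_n -> 'I_n -> R) (s : R) : 'I_n -> 'I_n -> R :=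
  fun x y => D x y + s * (x != y)%:R.

Lemma is_metric_shift (D : 'I_n -> 'I_n -> R) s :
  is_metric D -> 0 <= s -> is_metric (shift_dist D s).
Proof.
case=> D_ge0 D_eq0 D_sym D_tri s_ge0; rewrite /shift_dist; split.
- by move=> x y; rewrite addr_ge0 ?mulr_ge0.
- move=> x y; split; last by move=> ->; rewrite eqxx mulr0 addr0; apply/D_eq0.
  by move/eqP; rewrite paddr_eq0 ?mulr_ge0 // => /andP[/eqP/D_eq0].
- by move=> x y; rewrite D_sym eq_sym.
- move=> x y z.
  have neq_tri : (x != z)%:R <= (x != y)%:R + (y != z)%:R :> R.
    case: (x =P z) => [_|xz] /=; first by rewrite addr_ge0.
    case: (x =P y) => [xy|_] /=; last by rewrite lerDl.
    by rewrite -xy (introF eqP xz) add0r.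
  have := D_tri x y z; have := ler_wpM2l s_ge0 neq_tri; lra.
Qed.

Lemma is_metric_comp n' (D : 'I_n' -> 'I_n' -> R) (h : 'I_n -> 'I_n') :
  injective h -> is_metric D -> is_metric (fun y y' => D (h y) (h y')).
Proof.
move=> h_inj [D_ge0 D_eq0 D_sym D_tri]; split=> // x y.
by split=> [/D_eq0/h_inj | ->]; last exact/D_eq0.
Qed.

End Metrics.

Section Dense.
Variables (R : realType) (m : nat) (dX : 'I_m -> 'I_m -> R).
Variables (n : nat) (f : 'I_n -> 'I_m) (g : 'I_m -> 'I_n).
Hypothesis fK : cancel g f.
Hypothesis Xunit : simZ dX \in unitmx.
Variable D : 'I_n -> 'I_n -> R.

Local Notation fibre_rep := (fibre_rep f g).
Local Notation Zpull := (Zpull dX f).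
Local Notation Mlim := (Mlim dX f g).

Definition Bshift : 'M[R]_n := \matrix_(x, y)
  if fibre_rep y then 0 else Zpull x y * ((x == y)%:R - (x == g (f y))%:R).

Lemma Mlim_shift s : Mlim (shift_dist D s) = Mlim D + s *: Bshift.
Proof.
apply/matrixP => x y; rewrite !mxE /shift_dist.
case: fibre_rep; first by rewrite mulr0 addr0.
by case: (x == y); case: (x == g (f y)) => /=; ring.
Qed.

(* Mlim (shift_dist D u^-1) with its non-representative columns multiplied by u; its
   non-representative columns at u = 0 are positive multiples of e_y - e_(g (f y)). *)
Definition Mresc (u : R) : 'M[R]_n := \matrix_(x, y)
  if fibre_rep y then Mlim D x y else u * Mlim D x y + Bshift x y.

Definition Mresc_poly : {poly R} := \det (\matrix_(x, y)
  if fibre_rep y then (Mlim D x y)%:P else 'X * (Mlim D x y)%:P + (Bshift x y)%:P).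

Lemma Mresc_polyE u : Mresc_poly.[u] = \det (Mresc u).
Proof.
rewrite -horner_evalE -det_map_mx; congr (\det _); apply/matrixP => x y.
by rewrite !mxE /= horner_evalE; case: fibre_rep; rewrite !hornerE.
Qed.

Lemma Mlim_shift_rescale u : u != 0 ->
  Mlim (shift_dist D u^-1) *m diag_mx (\row_y if fibre_rep y then 1 else u) = Mresc u.
Proof.
move=> u0; rewrite Mlim_shift mul_mx_diag; apply/matrixP => x y; rewrite !mxE.
by case: fibre_rep; rewrite ?mulr0 ?addr0 ?mulr1 //; field.
Qed.

Lemma Mresc0_rowE (v : 'cV[R]_n) x : (Mresc 0 *m v) x 0 =
  \sum_c simZ dX (f x) c * v (g c) 0 + \sum_(y | ~~ fibre_rep y) Bshift x y * v y 0.
Proof.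
rewrite mxE (bigID fibre_rep) /=; congr (_ + _).
  rewrite big_fibre_rep //; apply: eq_bigr => c _.
  by rewrite !mxE /fibre_rep fK eqxx /= /Zpull fK mxE.
by apply: eq_big => // y /negbTE nrep; rewrite mxE nrep mul0r add0r.
Qed.

Lemma Mresc0_fibre_sum (v : 'cV[R]_n) b :
  \sum_(x | f x == b) \sum_(y | ~~ fibre_rep y) Bshift x y * v y 0 = 0.
Proof.
rewrite exchange_big /=; apply: big1 => y /negbTE nrep.
under eq_bigr do rewrite mxE nrep mulrAC mulrBr.
by rewrite sumrB !sum_cond_mul_delta /Zpull !fK subrr.
Qed.

Lemma Mresc0_kernel (v : 'cV[R]_n) : Mresc 0 *m v = 0 -> v = 0.
Proof.
move=> Nv; have row0 x : (Mresc 0 *m v) x 0 = 0 by rewrite Nv mxE.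
pose A b := \sum_c simZ dX b c * v (g c) 0.
have A0 b : A b = 0.
  have fibre_b : (0 < #|[pred x | f x == b]|)%N.
    by apply/card_gt0P; exists (g b); rewrite inE fK.
  have : \sum_(x | f x == b) ((Mresc 0 *m v) x 0 - \sum_(y | ~~ fibre_rep y) Bshift x y * v y 0)
      = A b *+ #|[pred x | f x == b]|.
    rewrite -sumr_const; apply: eq_big => [x|x /eqP <-]; first by rewrite inE.
    by rewrite Mresc0_rowE addrK.
  rewrite sumrB Mresc0_fibre_sum subr0 big1 => [/esym/eqP|x _]; last exact: row0.
  by rewrite mulrn_eq0 eqn0Ngt fibre_b /= => /eqP.
have vg0 c : v (g c) 0 = 0.
  have : simZ dX *m \col_c v (g c) 0 = 0.
    apply/matrixP => b j; rewrite (ord1 j) [RHS]mxE -(A0 b) mxE.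
    by apply: eq_bigr => c' _; rewrite [X in _ * X]mxE.
  move/(congr1 (mulmx (invmx (simZ dX)))); rewrite mulKmx // mulmx0.
  by move/matrixP/(_ c 0); rewrite !mxE.
apply/matrixP => j k; rewrite (ord1 k) mxE.
have [rep|nrep] := boolP (fibre_rep j); first by rewrite -(eqP rep) vg0.
have := row0 j; rewrite Mresc0_rowE -/(A (f j)) A0 add0r.
have -> : \sum_(y | ~~ fibre_rep y) Bshift j y * v y 0 =
    \sum_(y | ~~ fibre_rep y) Zpull j y * v y 0 * (y == j)%:R.
  apply: eq_big => // y nrep_y; rewrite mxE (negbTE nrep_y) [j == y]eq_sym mulrAC.
  suff -> : j == g (f y) = false by rewrite subr0.
  by apply: contraNF nrep => /eqP ->; rewrite /fibre_rep fK.
rewrite sum_cond_mul_delta nrep mul1r => /eqP.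
by rewrite mulf_eq0 /Zpull mxE gt_eqF ?expR_gt0 // => /eqP.
Qed.

Lemma det_Mresc0 : \det (Mresc 0) != 0.
Proof.
rewrite -det_tr; apply/negP => /det0P [v /eqP v0 vN]; apply: v0.
apply: trmx_inj; rewrite trmx0; apply: Mresc0_kernel.
by apply: trmx_inj; rewrite trmx_mul trmxK trmx0.
Qed.

Lemma exists_shift_det_neq0 e : 0 < e ->
  exists2 s, 0 < s < e & \det (Mlim (shift_dist D s)) != 0.
Proof.
move=> e0.
have poly_neq0 : Mresc_poly != 0.
  by apply: contraNneq det_Mresc0 => poly0; rewrite -Mresc_polyE poly0 horner0.
have [u eu nroot] := exists_nonroot_gt e^-1 poly_neq0.
have u0 : 0 < u by apply: lt_trans eu; rewrite invr_gt0.
exists u^-1.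
  by rewrite invr_gt0 u0 /= -[e]invrK ltf_pV2 // ?posrE ?invr_gt0.
apply: contraNneq nroot => det0.
by rewrite /root Mresc_polyE -(Mlim_shift_rescale (lt0r_neq0 u0)) det_mulmx det0 mul0r.
Qed.

End Dense.

Section LinesToX.
Variables (R : realType) (m : nat) (dX : 'I_m -> 'I_m -> R).
Hypothesis dX_metric : is_metric dX.
Hypothesis Xunit : simZ dX \in unitmx.

Lemma line_mag_limit_iso n1 n2 (f1 : 'I_n1 -> 'I_m) (f2 : 'I_n2 -> 'I_m)
    (D1 : 'I_n1 -> 'I_n1 -> R) (D2 : 'I_n2 -> 'I_n2 -> R) (h : 'I_n1 -> 'I_n2) (k : 'I_m -> 'I_m) :
  bijective h -> (forall x x', dX (k x) (k x') = dX x x') ->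
  (forall y, f2 (h y) = k (f1 y)) -> (forall y y', D2 (h y) (h y') = D1 y y') ->
  (forall i j, D2 i j = D2 j i) ->
  line_mag_limit dX (LineRep f1 D1) -> line_mag_limit dX (LineRep f2 D2).
Proof.
move=> h_bij k_iso hf hD D2_sym [near_w cvg_mag].
have [_ _ dX_sym _] := dX_metric.
have same_mag t :
    (has_weighting (simZ (line_dist dX (p := LineRep f1 D1) t)) <->
     has_weighting (simZ (line_dist dX (p := LineRep f2 D2) t))) /\
    magnitude (simZ (line_dist dX (p := LineRep f1 D1) t)) =
    magnitude (simZ (line_dist dX (p := LineRep f2 D2) t)).
  apply: magnitude_reindex h_bij _ _ => [y y'|i j]; rewrite !mxE /line_dist /=.
    by rewrite hD !hf k_iso.
  by rewrite D2_sym dX_sym.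
split; first by apply: filterS near_w => t /(proj1 (same_mag t)).1.
by under eq_fun do rewrite -(proj2 (same_mag _)).
Qed.

Definition limit_interior (p : line_rep R m) : Prop :=
  valid_rep p /\ exists2 e : R, 0 < e & forall D', is_metric D' ->
    (forall i j, `|D' i j - @lr_D _ _ p i j| < e) ->
    line_mag_limit dX (LineRep (@lr_f _ _ p) D').

Lemma limit_interior_saturated : saturated dX limit_interior.
Proof.
move=> p q _ q_valid [h [k [h_bij [_ k_iso] hf hD]]] [_ [e e0 lim_p]].
split=> //; exists e => // D' D'_metric D'_near.
have D'h_metric := is_metric_comp (bij_inj h_bij) D'_metric.
have D'_sym : forall i j, D' i j = D' j i by case: D'_metric.
apply: line_mag_limit_iso h_bij k_iso hf (fun y y' => erefl) D'_sym (lim_p _ D'h_metric _).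
by move=> i j; rewrite -hD; exact: D'_near.
Qed.

Lemma limit_interior_open : open_rep limit_interior.
Proof.
move=> n f D f_block D_metric [_ [e e0 lim_D]].
exists (e / 2); first by rewrite divr_gt0.
move=> D' D'_metric D'_near; split; first by split.
exists (e / 2); first by rewrite divr_gt0.
move=> D'' D''_metric D''_near; apply: lim_D => // i j /=.
have := D'_near i j; have := D''_near i j; have := ler_distD (D' i j) (D'' i j) (D i j); lra.
Qed.

Lemma limit_interior_dense : dense_rep dX limit_interior.
Proof.
move=> W _ W_open [[n f D] [[f_block D_metric] WD]].
have [e1 e1_pos W_box] := W_open n f D f_block D_metric WD.
have [g fK] : exists g : 'I_m -> 'I_n, cancel g f.
  by exists (fun b => projT1 (cid (f_block.2 b))) => b; exact: projT2 (cid (f_block.2 b)).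
have [s /andP [s_pos s_lt] det_shift] := exists_shift_det_neq0 fK Xunit D e1_pos.
have Ds_metric := is_metric_shift D_metric (ltW s_pos).
exists (LineRep f (shift_dist D s)); split; first by split.
  apply: W_box => // i j; rewrite /shift_dist addrAC subrr add0r.
  by case: (i != j); rewrite ?mulr1 ?mulr0 ?normr0 ?gtr0_norm.
split; first by split.
have [e2 e2_pos near_det] := box_nearP (near_det_Mlim det_shift).
by exists e2 => // D' _ /near_det /(line_mag_limit_Mlim fK Xunit).
Qed.

End LinesToX.

Theorem theorem4p1 (R : realType) (m : nat) (dX : 'I_m -> 'I_m -> R) :
  is_metric dX -> simZ dX \in unitmx ->
  exists S : line_rep R m -> Prop,
    [/\ saturated dX S, open_rep S, dense_rep dX S &
        forall p, valid_rep p -> S p -> line_mag_limit dX p].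
Proof.
move=> dX_metric Xunit; exists (limit_interior dX); split.
- exact: limit_interior_saturated.
- exact: limit_interior_open.
- exact: limit_interior_dense.
- move=> [n f D] [_ D_metric] [_ [e e0 lim_D]].
  by apply: lim_D => // i j; rewrite subrr normr0.
Qed.
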